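(* Let $\mathbb{M}$ be a meadow which is nontrivial (i.e. $\mathbb{M}\not\models 0=1$) and let $\mathbb{E}$ be a Boolean algebra with more than two elements. Then the meadow of conditional values $\mathbb{CV}(\mathbb{E},\mathbb{M})$ is not a cancellation meadow; that is, there exists $X\in\mathbb{CV}(\mathbb{E},\mathbb{M})$ with $X\neq v(0)$ and $X\cdot X^{-1}\neq v(1)$.
   Context: A meadow is a structure $(M,+,\cdot,-,{}^{-1},0,1)$ satisfying the axioms of a commutative ring with unit together with $(x^{-1})^{-1}=x$ and $x\cdot(x\cdot x^{-1})=x$ (so inverse is total, e.g. $0^{-1}=0$). A cancellation meadow is a meadow satisfying $x\neq 0\to x\cdot x^{-1}=1$. Boolean algebras are written $(E,\vee,\wedge,\neg,\top,\bot)$. Conditional-value (CV) terms over $\mathbb{E}$ and $\mathbb{M}$ are the closed terms generated by: $v(m)$ for each $m\in\mathbb{M}$; $-X$, $X^{-1}$, $X+Y$, $X\cdot Y$ for CV terms $X,Y$; and $e\!:\to X$ for an element $e\in\mathbb{E}$ and a CV term $X$. Fix a Stone representation of $\mathbb{E}$: a set $S$ and an isomorphism $\phi$ from $\mathbb{E}$ onto a field of subsets $W$ of $S$ (with $\wedge,\vee,\neg,\top,\bot$ mapped to $\cap,\cup$, complement, $S$, $\emptyset$). Each CV term $X$ is interpreted as a map $[\![X]\!]:S\to M$ by $[\![v(m)]\!](s)=m$, $[\![-X]\!](s)=-[\![X]\!](s)$, $[\![X^{-1}]\!](s)=([\![X]\!](s))^{-1}$, $[\![X+Y]\!](s)=[\![X]\!](s)+[\![Y]\!](s)$,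 $[\![X\cdot Y]\!](s)=[\![X]\!](s)\cdot[\![Y]\!](s)$, and $[\![e\!:\to X]\!](s)=[\![X]\!](s)$ if $s\in\phi(e)$, $=0$ otherwise. $\mathbb{CV}(\mathbb{E},\mathbb{M})$ is the set of CV terms modulo the congruence $X\equiv_S Y\iff \forall s\in S\,([\![X]\!](s)=[\![Y]\!](s))$, with the induced meadow operations, zero $v(0)$ and one $v(1)$. *)

Set Implicit Arguments.

Record meadow := Meadow {
  mcar :> Type;
  madd : mcar -> mcar -> mcar;
  mmul : mcar -> mcar -> mcar;
  mopp : mcar -> mcar;
  minv : mcar -> mcar;
  mzero : mcar;
  mone : mcar;
  madd_assoc : forall x y z, madd (madd x y) z = madd x (madd y z);
  madd_comm : forall x y, madd x y = madd y x;
  madd_0 : forall x, madd x mzero = x;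
  madd_opp : forall x, madd x (mopp x) = mzero;
  mmul_assoc : forall x y z, mmul (mmul x y) z = mmul x (mmul y z);
  mmul_comm : forall x y, mmul x y = mmul y x;
  mmul_1 : forall x, mmul x mone = x;
  mmul_distr : forall x y z, mmul x (madd y z) = madd (mmul x y) (mmul x z);
  minv_inv : forall x, minv (minv x) = x;
  mmul_inv_ril : forall x, mmul x (mmul x (minv x)) = x
}.

Record boolean_algebra := BooleanAlgebra {
  bcar :> Type;
  bjoin : bcar -> bcar -> bcar;
  bmeet : bcar -> bcar -> bcar;
  bneg : bcar -> bcar;
  btop : bcar;
  bbot : bcar;
  bjoin_assoc : forall x y z, bjoin (bjoin x y) z = bjoin x (bjoin y z);
  bmeet_assoc : forall x y z, bmeet (bmeet x y) z = bmeet x (bmeet y z);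
  bjoin_comm : forall x y, bjoin x y = bjoin y x;
  bmeet_comm : forall x y, bmeet x y = bmeet y x;
  bjoin_absorb : forall x y, bjoin x (bmeet x y) = x;
  bmeet_absorb : forall x y, bmeet x (bjoin x y) = x;
  bmeet_distr : forall x y z, bmeet x (bjoin y z) = bjoin (bmeet x y) (bmeet x z);
  bjoin_neg : forall x, bjoin x (bneg x) = btop;
  bmeet_neg : forall x, bmeet x (bneg x) = bbot
}.

(** * Stone representation: an isomorphism phi from E onto the field of
    subsets W := image of phi (subsets of S are predicates S -> Prop,
    compared extensionally). *)
Record stone_rep (E : boolean_algebra) (S : Type) := StoneRep {
  phi : E -> S -> Prop;
  phi_inj : forall e f, (forall s, phi e s <-> phi f s) -> e = f;
  phi_meet : forall e f s, phi (@bmeet E e f) s <-> (phi e s /\ phi f s);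
  phi_join : forall e f s, phi (@bjoin E e f) s <-> (phi e s \/ phi f s);
  phi_neg : forall e s, phi (@bneg E e) s <-> ~ phi e s;
  phi_top : forall s, phi (btop E) s;
  phi_bot : forall s, ~ phi (bbot E) s
}.

Inductive cvterm (E : boolean_algebra) (M : meadow) : Type :=
  | cv_v : mcar M -> cvterm E M
  | cv_opp : cvterm E M -> cvterm E M
  | cv_inv : cvterm E M -> cvterm E M
  | cv_add : cvterm E M -> cvterm E M -> cvterm E M
  | cv_mul : cvterm E M -> cvterm E M -> cvterm E M
  | cv_cond : bcar E -> cvterm E M -> cvterm E M.

From Stdlib Require Import Classical ClassicalEpsilon.

Definition pdec (P : Prop) : {P} + {~ P} :=
  excluded_middle_informative P.

Fixpoint cv_interp (E : boolean_algebra) (M : meadow) (S : Type)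
  (R : stone_rep E S) (X : cvterm E M) (s : S) : mcar M :=
  match X with
  | cv_v _ _ m => m
  | cv_opp X => mopp M (cv_interp R X s)
  | cv_inv X => minv M (cv_interp R X s)
  | cv_add X Y => madd M (cv_interp R X s) (cv_interp R Y s)
  | cv_mul X Y => mmul M (cv_interp R X s) (cv_interp R Y s)
  | cv_cond e X => if pdec (phi R e s) then cv_interp R X s else mzero M
  end.

(** The congruence X ==_S Y; CV(E,M) is cvterm modulo this relation,
    so equality in CV(E,M) is cv_equiv. *)
Definition cv_equiv (E : boolean_algebra) (M : meadow) (S : Type)
  (R : stone_rep E S) (X Y : cvterm E M) : Prop :=
  forall s, cv_interp R X s = cv_interp R Y s.

From Stdlib Require Import Classical.

Set Implicit Arguments.

(* A Boolean algebra with more than two elements has an element e other than top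
   and bottom, so phi(e) is a proper nonempty subset of S.  The conditional value
   e :-> v(1) then takes the value 1 on phi(e) and 0 off it: it is not v(0), and
   X * X^-1 vanishes wherever X does, so it is not v(1) either. *)

Lemma mmul_0l (M : meadow) (x : M) : mmul M (mzero M) x = mzero M.
Proof.
  rewrite mmul_comm.
  assert (Hdouble : mmul M x (mzero M) = madd M (mmul M x (mzero M)) (mmul M x (mzero M))).
  { rewrite <- mmul_distr, madd_0. reflexivity. }
  assert (Hcancel := madd_opp M (mmul M x (mzero M))).
  rewrite Hdouble in Hcancel at 1.
  rewrite madd_assoc, madd_opp, madd_0 in Hcancel.
  exact Hcancel.
Qed.

Lemma three_distinct_avoid_two (T : Type) (x y a b c : T) :
  a <> b -> a <> c -> b <> c -> exists e, e <> x /\ e <> y.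
Proof.
  intros Hab Hac Hbc.
  destruct (classic (a = x)), (classic (a = y)), (classic (b = x)),
    (classic (b = y)), (classic (c = x)), (classic (c = y));
    subst; try congruence; eauto.
Qed.

Section StoneRepresentation.

Variables (E : boolean_algebra) (S : Type) (R : stone_rep E S).

Lemma phi_not_top_exists (e : E) : e <> btop E -> exists s, ~ phi R e s.
Proof.
  intros Htop. apply NNPP. intros Hall. apply Htop, (phi_inj R). intros s. split.
  - intros _. apply phi_top.
  - intros _. apply NNPP. intros Hs. apply Hall. exists s. exact Hs.
Qed.

Lemma phi_not_bot_exists (e : E) : e <> bbot E -> exists s, phi R e s.
Proof.
  intros Hbot. apply NNPP. intros Hnone. apply Hbot, (phi_inj R). intros s. split.
  - intros Hs. exfalso. apply Hnone. exists s. exact Hs.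
  - intros Hs. exfalso. exact (phi_bot R s Hs).
Qed.

Variable M : meadow.

Lemma cv_interp_cond_in (e : E) (X : cvterm E M) (s : S) :
  phi R e s -> cv_interp R (cv_cond e X) s = cv_interp R X s.
Proof. intros Hs. simpl. destruct (pdec (phi R e s)); tauto. Qed.

Lemma cv_interp_cond_out (e : E) (X : cvterm E M) (s : S) :
  ~ phi R e s -> cv_interp R (cv_cond e X) s = mzero M.
Proof. intros Hs. simpl. destruct (pdec (phi R e s)); tauto. Qed.

Lemma cv_interp_mul_inv_zero (X : cvterm E M) (s : S) :
  cv_interp R X s = mzero M -> cv_interp R (cv_mul X (cv_inv X)) s = mzero M.
Proof. intros HX. simpl. rewrite HX. apply mmul_0l. Qed.

End StoneRepresentation.

Theorem mainTheorem1 (M : meadow) (E : boolean_algebra) (S : Type)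
  (R : stone_rep E S) :
  mzero M <> mone M ->
  (exists a b c : bcar E, a <> b /\ a <> c /\ b <> c) ->
  exists X : cvterm E M,
    ~ cv_equiv R X (@cv_v E M (mzero M)) /\
    ~ cv_equiv R (cv_mul X (cv_inv X)) (@cv_v E M (mone M)).
Proof.
  intros H01 [a [b [c [Hab [Hac Hbc]]]]].
  destruct (three_distinct_avoid_two (btop E) (bbot E) Hab Hac Hbc) as [e [Htop Hbot]].
  destruct (phi_not_top_exists R Htop) as [s_out Hout].
  destruct (phi_not_bot_exists R Hbot) as [s_in Hin].
  exists (cv_cond e (@cv_v E M (mone M))). split.
  - intros Hzero. specialize (Hzero s_in).
    rewrite (cv_interp_cond_in R) in Hzero by exact Hin.
    apply H01. symmetry. exact Hzero.
  - intros Hone. specialize (Hone s_out).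
    rewrite (cv_interp_mul_inv_zero R) in Hone
      by (apply (cv_interp_cond_out R); exact Hout).
    exact (H01 Hone).
Qed.
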